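(* Let $k\ge2$, $n\ge1$ be integers, let $\bar{\mathcal{P}}\in\mathbb{R}^{[k,n]}$ be a columnwise-substochastic tensor, $\mathbf{v}\in\mathbb{R}^n$ a stochastic vector and $\alpha\in[0,1)$. Let $\Delta:=\{\mathbf{y}\in\mathbb{R}^n_+:\mathbf{e}^T\mathbf{y}\le(1-\alpha)^{-\frac{1}{k-1}}\}$ and let $\mathbf{y}_c\in\Delta$. Then the equation $(\mathbf{e}^T\mathbf{y}_{c+1})^{k-2}\mathbf{y}_{c+1}=\alpha\bar{\mathcal{P}}\mathbf{y}_c^{k-1}+\mathbf{v}$ in the unknown $\mathbf{y}_{c+1}$ has the closed-form solution $$\mathbf{y}_{c+1}=\left(1+\alpha\mathbf{e}^T(\bar{\mathcal{P}}\mathbf{y}_c^{k-1})\right)^{-\frac{k-2}{k-1}}\left(\alpha\bar{\mathcal{P}}\mathbf{y}_c^{k-1}+\mathbf{v}\right)\in\Delta,$$ which is exactly $\mathbf{y}_{c+1}=\Phi(\mathbf{y}_c)$, where $\Phi(\mathbf{y}):=(1+\alpha\mathbf{e}^T(\bar{\mathcal{P}}\mathbf{y}^{k-1}))^{-\frac{k-2}{k-1}}(\mathbf{v}+\alpha\bar{\mathcal{P}}\mathbf{y}^{k-1})$.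
   Context: For $\mathcal{P}\in\mathbb{R}^{[k,n]}$ (real tensors of order $k$, dimension $n$) and $\mathbf{y}\in\mathbb{R}^n$, $(\mathcal{P}\mathbf{y}^{k-1})_i=\sum_{i_2,\dots,i_k}p_{i i_2\dots i_k}y_{i_2}\cdots y_{i_k}$. $\bar{\mathcal{P}}$ is columnwise-substochastic if its entries are nonnegative and $\sum_{i}\bar p_{i i_2\dots i_k}\le1$ for all $i_2,\dots,i_k$. $\mathbf{e}$ is the all-ones vector; a stochastic vector is nonnegative with entries summing to $1$. The left-hand side $(\mathbf{e}^T\mathbf{y})^{k-2}\mathbf{y}$ equals $(I\circ\mathbf{e}^{\circ(k-2)})\mathbf{y}^{k-1}$, where $I\circ\mathbf{e}^{\circ(k-2)}$ is the tensor with entries $\delta_{i_1i_2}$. *)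

From HB Require Import structures.
From mathcomp Require Import all_boot all_order all_algebra.
From mathcomp Require Import reals exp.
Set Implicit Arguments. Unset Strict Implicit. Unset Printing Implicit Defensive.
Import Order.TTheory GRing.Theory Num.Theory.
Local Open Scope ring_scope.

(* A real tensor of order k and dimension n: entry p_{i i_2 ... i_k} is
   [P i j] where j : {ffun 'I_k.-1 -> 'I_n} lists (i_2,...,i_k). *)
Definition tensor (R : realType) (k n : nat) :=
  'I_n -> {ffun 'I_k.-1 -> 'I_n} -> R.

Definition tapply (R : realType) (k n : nat) (P : tensor R k n)
  (y : 'I_n -> R) : 'I_n -> R :=
  fun i => \sum_(j : {ffun 'I_k.-1 -> 'I_n}) P i j * \prod_(t < k.-1) y (j t).

Definition esum (R : realType) (n : nat) (y : 'I_n -> R) : R :=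
  \sum_(i < n) y i.

Definition col_substochastic (R : realType) (k n : nat) (P : tensor R k n) :=
  (forall i j, 0 <= P i j) /\ (forall j, \sum_(i < n) P i j <= 1).

Definition stochastic (R : realType) (n : nat) (v : 'I_n -> R) :=
  (forall i, 0 <= v i) /\ esum v = 1.

Definition Delta (R : realType) (k n : nat) (alpha : R) (y : 'I_n -> R) :=
  (forall i, 0 <= y i) /\
  esum y <= powR (1 - alpha) (- (1 / (k.-1)%:R)).

Definition Phi (R : realType) (k n : nat) (P : tensor R k n) (v : 'I_n -> R)
  (alpha : R) (y : 'I_n -> R) : 'I_n -> R :=
  fun i => powR (1 + alpha * esum (tapply P y)) (- ((k - 2)%:R / (k.-1)%:R))
           * (v i + alpha * tapply P y i).

From HB Require Import structures.
From mathcomp Require Import all_boot all_order all_algebra.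
From mathcomp Require Import reals exp.
From mathcomp Require Import lra.
From mathcomp Require Import boolp.
Set Implicit Arguments. Unset Strict Implicit. Unset Printing Implicit Defensive.
Import Order.TTheory GRing.Theory Num.Theory.
Local Open Scope ring_scope.

(* The equation (e^T y)^m y = b is solved by rescaling b: with S = e^T b and
   u = S^(1/(m+1)), the vector y = u^(-m) b has e^T y = u, hence
   (e^T y)^m y = b.  For b = alpha P y_c^(k-1) + v and m = k - 2 the mass is
   S = 1 + alpha e^T (P y_c^(k-1)), and column-substochasticity gives
   e^T (P y^(k-1)) <= (e^T y)^(k-1).  So e^T y_c <= (1-alpha)^(-1/(k-1))
   yields S <= 1 + alpha / (1 - alpha) = 1 / (1 - alpha), which is exactly
   e^T y_{c+1} = S^(1/(k-1)) <= (1-alpha)^(-1/(k-1)). *)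

Section Tensor.

Variables (R : realType) (k n : nat).

Lemma esumZ (c : R) (y : 'I_n -> R) : esum (fun i => c * y i) = c * esum y.
Proof. by rewrite /esum mulr_sumr. Qed.

Lemma esum_ge0 (y : 'I_n -> R) : (forall i, 0 <= y i) -> 0 <= esum y.
Proof. by move=> y0; apply: sumr_ge0. Qed.

Lemma tapply_ge0 (P : tensor R k n) (y : 'I_n -> R) i :
  (forall i j, 0 <= P i j) -> (forall i, 0 <= y i) -> 0 <= tapply P y i.
Proof.
move=> P0 y0; apply: sumr_ge0 => j _.
by apply: mulr_ge0 => //; apply: prodr_ge0.
Qed.

Lemma esum_tapply_le (P : tensor R k n) (y : 'I_n -> R) :
  col_substochastic P -> (forall i, 0 <= y i) ->
  esum (tapply P y) <= esum y ^+ k.-1.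
Proof.
move=> [P0 P1] y0.
have -> : esum y ^+ k.-1 = \prod_(t < k.-1) \sum_(i < n) y i.
  by rewrite prodr_const card_ord.
rewrite bigA_distr_bigA /esum /tapply exchange_big /=.
apply: ler_sum => j _; rewrite -mulr_suml.
by apply: ler_piMl => //; apply: prodr_ge0.
Qed.

End Tensor.

Section Roots.

Variable R : realType.

Lemma powR_invnK (a : R) (q : nat) : (0 < q)%N -> 0 <= a ->
  (a `^ q%:R^-1) ^+ q = a.
Proof.
move=> q0 a0; rewrite -powR_mulrn ?powR_ge0 // -powRrM.
by rewrite mulVf ?pnatr_eq0 -?lt0n // powRr1.
Qed.

Lemma powR_Nfrac (a : R) (m q : nat) : 0 <= a ->
  a `^ (- (m%:R / q%:R)) = (a `^ q%:R^-1) ^- m.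
Proof.
by move=> a0; rewrite -powR_invn ?powR_ge0 // -powRrM mulrN mulrC.
Qed.

Lemma le_powRN_invn (x c : R) (q : nat) : (0 < q)%N -> 0 <= x -> 0 < c ->
  (x <= c `^ (- q%:R^-1)) = (x ^+ q <= c^-1).
Proof.
move=> q0 x0 c0.
have -> : c `^ (- q%:R^-1) = c^-1 `^ q%:R^-1.
  by rewrite -mulN1r powRrM powR_inv1 // (ltW c0).
rewrite -{2}(@powR_invnK c^-1 q) //; last by rewrite invr_ge0 (ltW c0).
by rewrite (ler_pXn2r q0) ?nnegrE ?powR_ge0.
Qed.

End Roots.

Section HomogeneousEquation.

Variables (R : realType) (n : nat).

Lemma homogeneous_eq_solution (m : nat) (b : 'I_n -> R) : 0 < esum b ->
  let y := fun i => esum b `^ (- (m%:R / m.+1%:R)) * b i in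
  esum y = esum b `^ m.+1%:R^-1 /\ (forall i, esum y ^+ m * y i = b i).
Proof.
move=> b0 y; have b0' := ltW b0; set u := esum b `^ m.+1%:R^-1.
have u0 : 0 < u by apply: powR_gt0.
have uV : u ^+ m \is a GRing.unit by rewrite unitfE expf_neq0 // gt_eqF.
have Su : esum b = u ^+ m.+1 by rewrite powR_invnK.
have ey : esum y = u.
  by rewrite esumZ powR_Nfrac // -/u Su exprS mulrCA mulVr ?mulr1.
split=> // i; rewrite ey /y powR_Nfrac // -/u.
by rewrite mulrA mulrV ?mul1r.
Qed.

End HomogeneousEquation.

Lemma add1_mul_le_inv1B (R : realType) (alpha s : R) :
  0 <= alpha < 1 -> s <= (1 - alpha)^-1 -> 1 + alpha * s <= (1 - alpha)^-1.
Proof.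
move=> /andP[a0 a1] hs.
have hr : (1 - alpha) * (1 - alpha)^-1 = 1 by rewrite mulfV // subr_eq0 gt_eqF.
have := ler_wpM2l a0 hs; nra.
Qed.

Theorem lemma4p1 (R : realType) (k n : nat) (hk : (2 <= k)%N) (hn : (1 <= n)%N)
  (P : tensor R k n) (v : 'I_n -> R) (alpha : R)
  (hP : col_substochastic P) (hv : stochastic v)
  (ha0 : 0 <= alpha) (ha1 : alpha < 1)
  (yc : 'I_n -> R) (hyc : Delta k alpha yc) :
  let ynext : 'I_n -> R := fun i =>
    powR (1 + alpha * esum (tapply P yc)) (- ((k - 2)%:R / (k - 1)%:R))
    * (alpha * tapply P yc i + v i) in
  (forall i, esum ynext ^+ (k - 2) * ynext i = alpha * tapply P yc i + v i)
  /\ Delta k alpha ynext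
  /\ ynext = Phi P v alpha yc.
Proof.
case: k hk P hP hyc => [|[|m]] // _ P hP [yc0 hyc] ynext.
rewrite /= subn2 subn1 /= in ynext *; rewrite div1r in hyc.
have t0 i : 0 <= tapply P yc i by apply: tapply_ge0 => //; case: hP.
have b0 i : 0 <= alpha * tapply P yc i + v i.
  by rewrite addr_ge0 ?mulr_ge0 //; case: hv.
have eb : esum (fun i => alpha * tapply P yc i + v i)
          = 1 + alpha * esum (tapply P yc).
  by rewrite /esum big_split -mulr_sumr /= -/(esum v) hv.2 addrC.
have S0 : 0 < esum (fun i => alpha * tapply P yc i + v i).
  by rewrite eb; have := mulr_ge0 ha0 (esum_ge0 t0); lra.
have [ey sol] := homogeneous_eq_solution m S0.
rewrite eb in S0 ey sol.
split; first exact: sol.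
split; first split.
- by move=> i; rewrite mulr_ge0 ?powR_ge0 ?b0.
- rewrite div1r ey le_powRN_invn ?powR_ge0 ?subr_gt0 // powR_invnK ?(ltW S0) //.
  apply: add1_mul_le_inv1B; first by rewrite ha0.
  apply: le_trans (esum_tapply_le hP yc0) _.
  by rewrite -le_powRN_invn ?esum_ge0 ?subr_gt0.
- by apply/funext => i; rewrite /Phi subn2 [v i + _]addrC.
Qed.
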